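(* Let $f(x,y)=\sqrt{\frac{x+y-2}{xy}}$ for real $x,y\geq 1$, and for real numbers $a>b\geq 2$ let $G(a,b)=f(a,b-1)-f(a-1,b)$. Then $G(a,b)>0$.
   Context: $f$ is only defined (in the paper) for arguments $x,y\geq 1$. *)

From Stdlib Require Import Reals.
Open Scope R_scope.

Definition f (x y : R) : R := sqrt ((x + y - 2) / (x * y)).

Definition G (a b : R) : R := f a (b - 1) - f (a - 1) b.

From Pilot Require Import Defs.
From Stdlib Require Import Reals Lra Psatz.
Open Scope R_scope.

(* Both radicands have the same numerator [a + b - 3 > 0], while the
   denominators differ by [(a - 1) b - a (b - 1) = a - b > 0]; since [sqrt] is
   strictly increasing, [f a (b - 1)] is the larger root. *)

Lemma Rdiv_lt_contravar_r (s p q : R) :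
  0 < s -> 0 < p -> p < q -> s / q < s / p.
Proof.
  intros Hs Hp Hpq.
  apply Rmult_lt_compat_l; [lra |].
  apply Rinv_lt_contravar; nra.
Qed.

Lemma Rdiv_nonneg (s p : R) : 0 <= s -> 0 < p -> 0 <= s / p.
Proof.
  intros Hs Hp.
  apply Rmult_le_pos; [lra | left; apply Rinv_0_lt_compat; lra].
Qed.

Theorem lemma1p5 (a b : R) (hb : 2 <= b) (hab : b < a) : G a b > 0.
Proof.
  (* [Reals] exports an unrelated [Rtopology.f], hence the qualified name. *)
  unfold G, Defs.f.
  replace (a + (b - 1) - 2) with (a + b - 3) by ring.
  replace (a - 1 + b - 2) with (a + b - 3) by ring.
  assert (Hnum : 0 < a + b - 3) by lra.
  assert (Hden : 0 < a * (b - 1)) by nra.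
  assert (Hden_lt : a * (b - 1) < (a - 1) * b) by nra.
  apply Rlt_gt, Rgt_minus, Rlt_gt, sqrt_lt_1.
  - apply Rdiv_nonneg; nra.
  - apply Rdiv_nonneg; nra.
  - now apply Rdiv_lt_contravar_r.
Qed.
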